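(* Let $I=\{1,\dots,\ell\}$, $J=\{\ell+1,\dots,p\}$, let $h_1,\dots,h_p\colon\mathbb R^n\times\mathbb R^m\to\overline{\mathbb R}$ and $\Gamma(x):=\{y\in\mathbb R^m\mid h_i(x,y)\le0\ (i\in I),\ h_i(x,y)=0\ (i\in J)\}$. Fix $\bar x\in\operatorname{dom}\Gamma$ and $\bar y\in\Gamma(\bar x)$. Assume that $h_1,\dots,h_p$ are continuous and continuously differentiable with respect to $y$ in a neighborhood of $\{\bar x\}\times\Gamma(\bar x)$, and that $h_i(x,\cdot)\colon\mathbb R^m\to\mathbb R$ is continuous for every $x\in\operatorname{dom}\Gamma$ and every $i$. Assume (A1): for each $x\in\mathbb R^n$, the functions $h_i(x,\cdot)$, $i\in I$, are convex and the functions $h_i(x,\cdot)$, $i\in J$, are affine; and (A2): $\Gamma$ is locally bounded at $\bar x$. Suppose there exist a constant $M>0$ and sequences $\{x^k\}\subset\operatorname{dom}\Gamma$, $\{\nu^k\}\subset\mathbb R^m$, $\{y^k\}\subset\mathbb R^m$ with $x^k\to\bar x$, $\nu^k\to\bar y$, $\nu^k\notin\Gamma(x^k)$ and $y^k\in\Pi(\nu^k,\Gamma(x^k))$ for all $k$, such that $\Lambda^M_{\nu^k}(x^k,y^k)\neq\emptyset$ for all sufficiently large $k$. Then $y^k\to\bar y$ and, for all sufficiently large $k$, $$\operatorname{dist}(\nu^k,\Gamma(x^k))\le M\max\{0,\max_{i\in I}h_i(x^k,\nu^k),\max_{i\in J}|h_i(x^k,\nu^k)|\}.$$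
   Context: $\operatorname{dom}\Gamma:=\{x\mid\Gamma(x)\ne\emptyset\}$; $\|\cdot\|$ Euclidean norm; $\operatorname{dist}(\nu,A):=\inf_{z\in A}\|z-\nu\|$; $\Pi(\nu,A):=\operatorname{argmin}\{\|z-\nu\|\mid z\in A\}$. $\Gamma$ is locally bounded at $\bar x$ if there are a bounded set $B$ and a neighborhood $V$ of $\bar x$ with $\Gamma(x)\subset B$ for all $x\in V$. For $x\in\operatorname{dom}\Gamma$, $\nu\notin\Gamma(x)$, $y\in\Pi(\nu,\Gamma(x))$ and $M>0$: $\Lambda_\nu(x,y):=\{\lambda\in\mathbb R^p\mid \frac{y-\nu}{\|y-\nu\|}+\sum_{i=1}^p\lambda_i\nabla_yh_i(x,y)=0,\ \lambda_i\ge0,\ \lambda_ih_i(x,y)=0\ \forall i\in I\}$ and $\Lambda^M_\nu(x,y):=\{\lambda\in\Lambda_\nu(x,y)\mid\sum_{i=1}^p|\lambda_i|\le M\}$. *)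

From HB Require Import structures.
From mathcomp Require Import all_boot all_order all_algebra.
From mathcomp Require Import all_classical all_reals all_analysis.
Set Implicit Arguments. Unset Strict Implicit. Unset Printing Implicit Defensive.
Import Order.TTheory GRing.Theory Num.Theory.
Import numFieldNormedType.Exports.
Local Open Scope classical_set_scope.
Local Open Scope ring_scope.

Section Defs.
Variable R : realType.

(* Euclidean inner product and Euclidean norm on R^m = 'rV[R]_m
   (the library's norm on 'rV is the max norm, so we define our own). *)
Definition dotv (m : nat) (u v : 'rV[R]_m) : R := \sum_(j < m) u ord0 j * v ord0 j.
Definition enorm (m : nat) (u : 'rV[R]_m) : R := Num.sqrt (dotv u u).

Definition dist_set (m : nat) (nu : 'rV[R]_m) (A : set 'rV[R]_m) : R :=
  inf [set enorm (z - nu) | z in A].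

Definition in_proj (m : nat) (y nu : 'rV[R]_m) (A : set 'rV[R]_m) : Prop :=
  A y /\ forall z, A z -> enorm (y - nu) <= enorm (z - nu).

Definition gradv (m : nat) (f : 'rV[R]_m -> R) (y : 'rV[R]_m) : 'rV[R]_m :=
  \row_(j < m) ('d f y (delta_mx ord0 j : 'rV[R]_m)).

(* the feasible-set map Gamma(x), with I = {i < l}, J = {l <= i < p} *)
Definition Gam (n m p l : nat) (h : 'I_p -> 'rV[R]_n -> 'rV[R]_m -> \bar R)
  (x : 'rV[R]_n) : set 'rV[R]_m :=
  [set y | forall i : 'I_p, ((i < l)%N -> (h i x y <= 0)%E) /\
                            ((l <= i)%N -> h i x y = 0%E)].

Definition domG (n m p l : nat) (h : 'I_p -> 'rV[R]_n -> 'rV[R]_m -> \bar R) :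
  set 'rV[R]_n := [set x | Gam l h x !=set0].

(* convexity of an extended-real-valued function (convex epigraph) *)
Definition econvex (m : nat) (f : 'rV[R]_m -> \bar R) : Prop :=
  forall (y z : 'rV[R]_m) (t a b : R), 0 <= t <= 1 ->
    (f y <= a%:E)%E -> (f z <= b%:E)%E ->
    (f (t *: y + (1 - t) *: z)%R <= (t * a + (1 - t) * b)%R%:E)%E.

Definition eaffine (m : nat) (f : 'rV[R]_m -> \bar R) : Prop :=
  exists (a : 'rV[R]_m) (b : R), forall y, f y = (dotv a y + b)%:E.

Definition Lam (n m p l : nat) (h : 'I_p -> 'rV[R]_n -> 'rV[R]_m -> \bar R)
  (nu : 'rV[R]_m) (x : 'rV[R]_n) (y : 'rV[R]_m) : set ('I_p -> R) :=
  [set lam | (enorm (y - nu))^-1 *: (y - nu)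
              + \sum_(i < p) lam i *: gradv (fun z => fine (h i x z)) y = 0
           /\ forall i : 'I_p, (i < l)%N ->
                0 <= lam i /\ ((lam i)%:E * h i x y = 0)%E].

Definition LamM (n m p l : nat) (h : 'I_p -> 'rV[R]_n -> 'rV[R]_m -> \bar R)
  (M : R) (nu : 'rV[R]_m) (x : 'rV[R]_n) (y : 'rV[R]_m) : set ('I_p -> R) :=
  [set lam | Lam l h nu x y lam /\ \sum_(i < p) `|lam i| <= M].

End Defs.

From HB Require Import structures.
From mathcomp Require Import all_boot all_order all_algebra.
From mathcomp Require Import all_classical all_reals all_analysis.
From mathcomp Require Import ring.
Set Implicit Arguments. Unset Strict Implicit. Unset Printing Implicit Defensive.
Import Order.TTheory GRing.Theory Num.Theory.
Import numFieldNormedType.Exports.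
Local Open Scope classical_set_scope.
Local Open Scope ring_scope.

(* If [y] is feasible for [x] and [lam] is a multiplier in [LamM M nu x y],
   pairing the stationarity condition with [d := nu - y] gives
   [|y - nu| = sum_i lam_i h_i'(y; d)]; convexity or affinity bounds each
   directional derivative by [h_i(nu) - h_i(y)], and complementarity leaves at
   most [M] times the constraint violation at [nu], which therefore also bounds
   [dist nu (Gam x)].  This applies as soon as [(x k, y k)] is in the
   neighbourhood where the [h_i] are differentiable, so it suffices that
   [y k --> ybar].  By local boundedness the [y k] lie in a compact set; a
   cluster point [yh] is feasible at [xbar], since convexity keeps the segment
   from [ybar] to [yh] feasible in the limit wherever [h] is continuous and
   connectedness of [0, 1] propagates this to the whole segment; then the error
   bound, with a violation tending to 0 at [(xbar, ybar)], forces [yh = ybar]. *)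

Section Euclidean.
Variables (R : realType) (m : nat).
Implicit Types u v w : 'rV[R]_m.

Lemma dotvC u v : dotv u v = dotv v u.
Proof. by apply: eq_bigr => j _; rewrite mulrC. Qed.

Lemma dotvDr u v w : dotv u (v + w) = dotv u v + dotv u w.
Proof. by rewrite /dotv -big_split; apply: eq_bigr => j _; rewrite mxE mulrDr. Qed.

Lemma dotvZr (a : R) u v : dotv u (a *: v) = a * dotv u v.
Proof. by rewrite /dotv mulr_sumr; apply: eq_bigr => j _; rewrite mxE mulrCA. Qed.

Lemma dotvZl (a : R) u v : dotv (a *: u) v = a * dotv u v.
Proof. by rewrite dotvC dotvZr dotvC. Qed.

Lemma dotvDl u v w : dotv (u + v) w = dotv u w + dotv v w.
Proof. by rewrite dotvC dotvDr !(dotvC w). Qed.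

Lemma dotvNr u v : dotv u (- v) = - dotv u v.
Proof. by rewrite -scaleN1r dotvZr mulN1r. Qed.

Lemma dotv0l u : dotv 0 u = 0.
Proof. by rewrite /dotv big1 // => j _; rewrite mxE mul0r. Qed.

Lemma dotv_suml (I : finType) (F : I -> 'rV[R]_m) u :
  dotv (\sum_(i : I) F i) u = \sum_(i : I) dotv (F i) u.
Proof.
apply: (big_ind2 (fun a b => dotv a u = b)) => //; first exact: dotv0l.
by move=> a b c d <- <-; rewrite dotvDl.
Qed.

Lemma dotvv_ge0 u : 0 <= dotv u u.
Proof. by apply: sumr_ge0 => j _; rewrite -expr2 sqr_ge0. Qed.

Lemma enorm_ge0 u : 0 <= enorm u.
Proof. exact: sqrtr_ge0. Qed.

Lemma enorm_sqr u : enorm u ^+ 2 = dotv u u.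
Proof. by rewrite /enorm sqr_sqrtr // dotvv_ge0. Qed.

Lemma dotv_normalized u : dotv ((enorm u)^-1 *: u) u = enorm u.
Proof.
rewrite dotvZl -enorm_sqr.
have [->|nz] := eqVneq (enorm u) 0; first by rewrite invr0 mul0r.
by rewrite expr2 mulKf.
Qed.

Lemma coord_le_enorm u j : `|u ord0 j| <= enorm u.
Proof.
rewrite -(ger0_norm (enorm_ge0 u)) -ler_sqr ?nnegrE ?normr_ge0 //.
rewrite !real_normK ?num_real // enorm_sqr /dotv (bigD1 j) //= -expr2 lerDl.
by apply: sumr_ge0 => i _; rewrite -expr2 sqr_ge0.
Qed.

Lemma norm_le_enorm u : `|u| <= enorm u.
Proof.
change (mx_norm u <= enorm u); rewrite mx_normE.
elim/big_ind: _ => [|a b ? ?|[i j] _]; first exact: enorm_ge0.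
- by rewrite num_max ge_max; apply/andP.
- by rewrite (ord1 i) coord_le_enorm.
Qed.

Lemma dist_set_le (A : set 'rV[R]_m) u v : A v -> dist_set u A <= enorm (v - u).
Proof.
move=> Av; apply: ge_inf; last by exists v.
by exists 0 => _ [w _ <-]; exact: enorm_ge0.
Qed.

End Euclidean.

Section Differential.
Variables (R : realType) (m : nat).
Implicit Types (g : 'rV[R]_m -> R) (y d : 'rV[R]_m).

Lemma dotv_gradv g y d : dotv (gradv g y) d = 'd g y d.
Proof.
rewrite {2}(row_sum_delta d) linear_sum /dotv; apply: eq_bigr => j _.
by rewrite linearZ /= mxE mulrC.
Qed.

Lemma diff_le_secant g y d c : differentiable g y ->
  (forall t, 0 < t < 1 -> g (y + t *: d) <= g y + t * c) -> 'd g y d <= c.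
Proof.
move=> dg secant; rewrite -deriveE //.
have /cvg_ex[L gL] : derivable g y d by exact: diff_derivable.
have gL' : (fun t : R => t^-1 *: ((g \o shift y) (t *: d) - g y)) @ 0^'+ --> L.
  exact: cvg_dnbhs_at_right.
have -> : 'D_d g y = L by rewrite /derive; exact: cvg_lim.
apply: (cvgr_to_le gL'); near=> t.
have t0 : 0 < t by near: t; exact: nbhs_right_gt.
have t1 : t < 1 by near: t; exact: nbhs_right_lt ltr01.
have := secant t; rewrite t0 t1 => /(_ isT) secant_t.
rewrite /= [t *: d + y]addrC; change (t^-1 * (g (y + t *: d) - g y) <= c).
by rewrite mulrC ler_pdivrMr // mulrC lerBlDl.
Unshelve. all: by end_near.
Qed.

Lemma convex_diff_le g y z : differentiable g y ->
  (forall t, 0 <= t <= 1 -> g ((1 - t) *: y + t *: z) <= (1 - t) * g y + t * g z) ->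
  'd g y (z - y) <= g z - g y.
Proof.
move=> dg cvx; apply: diff_le_secant => // t /andP[t0 t1].
have -> : y + t *: (z - y) = (1 - t) *: y + t *: z.
  by rewrite scalerBr scalerBl scale1r addrCA [RHS]addrC.
have -> : g y + t * (g z - g y) = (1 - t) * g y + t * g z by ring.
by apply: cvx; rewrite !ltW.
Qed.

Lemma affine_diff g a b y d : (forall z, g z = dotv a z + b) ->
  differentiable g y -> 'd g y d = dotv a d.
Proof.
move=> gE dg; have gD e t : g (y + t *: e) = g y + t * dotv a e.
  by rewrite !gE dotvDr dotvZr addrAC.
apply/eqP; rewrite eq_le; apply/andP; split.
  by apply: diff_le_secant => // t _; rewrite gD.
rewrite -[X in X <= _]opprK lerNl -raddfN -dotvNr.
by apply: diff_le_secant => // t _; rewrite gD.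
Qed.

End Differential.

Section Violation.
Variables (R : realType) (p l : nat).
Implicit Types v : 'I_p -> R.

Definition feasible v :=
  forall i : 'I_p, ((i < l)%N -> v i <= 0) /\ ((l <= i)%N -> v i = 0).

Definition violation v : R :=
  \big[Num.max/0]_(i < p) (if (i < l)%N then v i else `|v i|).

Lemma violation_ge0 v : 0 <= violation v.
Proof. by rewrite /violation bigmax_idl le_max lexx. Qed.

Lemma le_violation_ineq v (i : 'I_p) : (i < l)%N -> v i <= violation v.
Proof. by move=> il; apply: le_trans (le_bigmax _ _ i); rewrite il. Qed.

Lemma le_violation_eq v (i : 'I_p) : (l <= i)%N -> `|v i| <= violation v.
Proof. by move=> li; apply: le_trans (le_bigmax _ _ i); rewrite ltnNge li. Qed.

Lemma violation_feasible v : feasible v -> violation v = 0.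
Proof.
move=> fv; apply/eqP; rewrite eq_le violation_ge0 andbT /violation.
apply: bigmax_le => // i _; have [vI vJ] := fv i.
by case: ltnP => [/vI | /vJ ->]; rewrite ?normr0.
Qed.

Lemma violation_cvg (T : Type) (F : set_system T) (FF : Filter F)
    (v : T -> 'I_p -> R) v0 :
  (forall i, v ^~ i @ F --> v0 i) -> violation (v t) @[t --> F] --> violation v0.
Proof.
move=> vcvg; apply: cvg_big => [[a b]|i _].
  by apply: (@continuous_max _ _ fst snd); [exact: cvg_fst | exact: cvg_snd].
by case: ltnP => _; [exact: vcvg | apply: cvg_norm; exact: vcvg].
Qed.

End Violation.

Section ErrorBound.
Variables (R : realType) (m p l : nat) (g : 'I_p -> 'rV[R]_m -> R).
Hypothesis g_convex : forall i : 'I_p, (i < l)%N -> forall y z t, 0 <= t <= 1 ->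
  g i ((1 - t) *: y + t *: z) <= (1 - t) * g i y + t * g i z.
Hypothesis g_affine : forall i : 'I_p, (l <= i)%N ->
  exists a b, forall z, g i z = dotv a z + b.

Lemma kkt_error_bound y0 nu0 (lam : 'I_p -> R) :
  feasible l (g ^~ y0) -> (forall i, differentiable (g i) y0) ->
  (enorm (y0 - nu0))^-1 *: (y0 - nu0) + \sum_(i < p) lam i *: gradv (g i) y0 = 0 ->
  (forall i : 'I_p, (i < l)%N -> 0 <= lam i /\ lam i * g i y0 = 0) ->
  enorm (y0 - nu0) <= (\sum_(i < p) `|lam i|) * violation l (g ^~ nu0).
Proof.
move=> feas dg kkt lam_sign; set d := nu0 - y0.
have -> : enorm (y0 - nu0) = \sum_(i < p) lam i * 'd (g i) y0 d.
  move/(congr1 (fun w => dotv w d)): kkt; rewrite dotv0l dotvDl dotv_suml.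
  rewrite /d -(opprB y0 nu0) dotvNr dotv_normalized => /eqP.
  rewrite addrC addr_eq0 opprK => /eqP <-.
  by apply: eq_bigr => i _; rewrite dotvZl dotv_gradv.
rewrite mulr_suml; apply: ler_sum => i _.
have [il|li] := ltnP i l.
- have [lam_ge0 compl] := lam_sign i il.
  have := ler_wpM2l lam_ge0 (convex_diff_le (dg i) (g_convex il y0 nu0)).
  move/le_trans; apply.
  rewrite mulrBr compl subr0 ger0_norm //.
  exact/ler_wpM2l/le_violation_ineq.
- have [a [b gE]] := g_affine li.
  have -> : 'd (g i) y0 d = g i nu0 - g i y0.
    by rewrite (affine_diff _ gE (dg i)) !gE /d dotvDr dotvNr; ring.
  rewrite ((feas i).2 li) subr0; apply: le_trans (ler_norm _) _.
  by rewrite normrM; exact/ler_wpM2l/le_violation_eq.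
Qed.

End ErrorBound.

Section FiniteConstraints.
Variables (R : realType) (n m p l : nat) (h : 'I_p -> 'rV[R]_n -> 'rV[R]_m -> \bar R).
Variable x0 : 'rV[R]_n.
Hypothesis h_fin : forall i z, h i x0 z \is a fin_num.

Local Notation g i := (fun z => fine (h i x0 z)).

Lemma GamP z : Gam l h x0 z <-> feasible l (fun i => g i z).
Proof.
split=> Gz i; have [GI GJ] := Gz i; have hE := fineK (h_fin i z).
- by split=> [/GI | /GJ ->]; rewrite // -lee_fin hE.
- split=> [/GI | /GJ gz]; first by rewrite -hE lee_fin.
  by rewrite -hE gz.
Qed.

Lemma econvex_fine i : econvex (h i x0) -> forall y z t, 0 <= t <= 1 ->
  g i ((1 - t) *: y + t *: z) <= (1 - t) * g i y + t * g i z.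
Proof.
move=> cvx y z t /andP[t0 t1].
have t01 : 0 <= 1 - t <= 1 by rewrite subr_ge0 t1 lerBlDr lerDl t0.
have := cvx y z (1 - t) (g i y) (g i z) t01.
rewrite !fineK ?h_fin // subKr => /(_ (lexx _) (lexx _)).
by rewrite -lee_fin fineK ?h_fin.
Qed.

Lemma eaffine_fine i : eaffine (h i x0) ->
  exists a b, forall z, g i z = dotv a z + b.
Proof. by case=> a [b hE]; exists a, b => z; rewrite hE. Qed.

Lemma Gam_closed : (forall i, continuous (g i)) -> closed (Gam l h x0).
Proof.
move=> g_cont z /(closureS (fun w => (GamP w).1)) clz; apply/GamP => i.
have closed_preim (D : set R) : closed D -> closed (g i @^-1` D).
  by apply: preimage_closed => w _; exact: g_cont.
split=> [il|li].
- apply: (closed_preim _ (@closed_le _ 0) z); apply: closureS clz => w /(_ i).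
  by case=> /(_ il).
- apply: (closed_preim _ (@closed_eq _ 0) z); apply: closureS clz => w /(_ i).
  by case=> _ /(_ li).
Qed.

Hypothesis h_A1 : forall i : 'I_p,
  ((i < l)%N -> econvex (h i x0)) /\ ((l <= i)%N -> eaffine (h i x0)).

Lemma LamM_error_bound M nu0 y0 lam :
  Gam l h x0 y0 -> (forall i, differentiable (g i) y0) ->
  LamM l h M nu0 x0 y0 lam ->
  enorm (y0 - nu0) <= M * violation l (fun i => g i nu0).
Proof.
move=> /GamP feas dg [[kkt lam_sign] lam_le].
apply: le_trans (ler_wpM2r (violation_ge0 _ _) lam_le).
apply: (kkt_error_bound (g := fun i => g i)) => // [i il y z t|i li|i il].
- exact: econvex_fine ((h_A1 i).1 il) _ _ _.
- exact: eaffine_fine ((h_A1 i).2 li).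
- have [lam_ge0] := lam_sign i il.
  by rewrite -[h i x0 y0](fineK (h_fin i y0)) -EFinM => -[].
Qed.

End FiniteConstraints.

Arguments GamP [R n m p l h x0].

Section ClusterPoints.
Variable R : realType.

Lemma cvg_to_pair (I : Type) (F : set_system I) (FF : Filter F)
    (T S : topologicalType) (u : I -> T) (v : I -> S) (a : T) (b : S) :
  u @ F --> a -> v @ F --> b -> (u i, v i) @[i --> F] --> ((a, b) : T * S).
Proof. exact: cvg_pair. Qed.

Lemma cluster_le0 (T : topologicalType) (u : nat -> T) a (Q : set T) (G : T -> R) :
  cluster (u @ \oo) a -> nbhs a Q -> {for a, continuous G} ->
  (\forall k \near \oo, Q (u k) -> G (u k) <= 0) -> G a <= 0.
Proof.
move=> cl Qa Gcont uG; rewrite leNgt; apply/negP => Ga.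
have [q [QG [Qq Gq]]] : ([set q | Q q -> G q <= 0] `&`
    (Q `&` [set q | 0 < G q])) !=set0.
  by apply: (cl _ _ uG); apply: filterI Qa _; exact: cvgr_gt Gcont _ Ga.
by move: (QG Qq); rewrite leNgt Gq.
Qed.

Lemma cluster_pair (T S : topologicalType) (u : nat -> T) (v : nat -> S) a b :
  u @ \oo --> a -> cluster (v @ \oo) b -> cluster ((u k, v k) @[k --> \oo]) (a, b).
Proof.
move=> ua vb A B uvA /= [[Qa Qb] /= [Qa_a Qb_b] QB].
pose Av := v @` [set k | A (u k, v k) /\ Qa (u k)].
have [_ [[k [Ak Qk] <-] Qbk]] : (Av `&` Qb) !=set0.
  apply: (vb Av _ _ Qb_b).
  have uQa : \forall k \near \oo, Qa (u k) := ua _ Qa_a.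
  have uvA' : \forall k \near \oo, A (u k, v k) := uvA.
  by apply: filterS (filterI uvA' uQa) => k kA; exists k.
by exists (u k, v k); split => //; apply: QB.
Qed.

End ClusterPoints.

Section Limits.
Variables (R : realType) (n m p l : nat) (h : 'I_p -> 'rV[R]_n -> 'rV[R]_m -> \bar R).
Variables (xbar : 'rV[R]_n) (ybar : 'rV[R]_m) (U : set ('rV[R]_n * 'rV[R]_m)).
Variables (x : nat -> 'rV[R]_n) (y : nat -> 'rV[R]_m).

Local Notation f i := (fun q : 'rV[R]_n * 'rV[R]_m => fine (h i q.1 q.2)).

Hypothesis U_open : open U.
Hypothesis Gam_U : forall z, Gam l h xbar z -> U (xbar, z).
Hypothesis h_cont_U : forall q i, U q -> {for q, continuous (f i)}.
Hypothesis h_diff_U : forall q i, U q -> differentiable (fun z => fine (h i q.1 z)) q.2.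
Hypothesis h_dom : forall x0, domG l h x0 -> forall i : 'I_p,
  (forall z, h i x0 z \is a fin_num) /\ continuous (fun z => fine (h i x0 z)).
Hypothesis h_A1 : forall x0 (i : 'I_p),
  ((i < l)%N -> econvex (h i x0)) /\ ((l <= i)%N -> eaffine (h i x0)).
Hypothesis xbar_dom : domG l h xbar.
Hypothesis ybar_Gam : Gam l h xbar ybar.
Hypothesis x_dom : forall k, domG l h (x k).
Hypothesis x_cvg : x @ \oo --> xbar.
Hypothesis y_Gam : forall k, Gam l h (x k) (y k).

Let h_fin x0 (dx : domG l h x0) i z := (h_dom dx i).1 z.

Lemma Gam_segment yh t : cluster (y @ \oo) yh -> 0 <= t <= 1 ->
  U (xbar, (1 - t) *: ybar + t *: yh) -> Gam l h xbar ((1 - t) *: ybar + t *: yh).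
Proof.
move=> cl t01 Uz; have cl2 := cluster_pair x_cvg cl.
apply/(GamP (h_fin xbar_dom)) => i.
have [ybarI ybarJ] := (GamP (h_fin xbar_dom) _).1 ybar_Gam i.
pose G q := f i (q.1, (1 - t) *: ybar + t *: q.2) - (1 - t) * f i (q.1, ybar).
have Gcont : {for (xbar, yh), continuous G}.
  have seg_cont : {for (xbar, yh), continuous (fun q : 'rV[R]_n * 'rV[R]_m =>
                                                (q.1, (1 - t) *: ybar + t *: q.2))}.
    apply: cvg_to_pair; first exact: cvg_fst.
    by apply: cvgD; [exact: cvg_cst | apply: cvgZ; [exact: cvg_cst | exact: cvg_snd]].
  have ybar_cont : {for (xbar, yh), continuous (fun q : 'rV[R]_n * 'rV[R]_m =>
                                                  (q.1, ybar))}.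
    by apply: cvg_to_pair; [exact: cvg_fst | exact: cvg_cst].
  apply: cvgB; first exact: continuous_comp seg_cont (h_cont_U (i := i) Uz).
  apply: cvgM; first exact: cvg_cst.
  exact: continuous_comp ybar_cont (h_cont_U (i := i) (Gam_U ybar_Gam)).
have yk_feas k := (GamP (h_fin (x_dom k)) _).1 (y_Gam k) i.
have /andP[t0 t1] := t01.
split=> [il|li].
- suff : G (xbar, yh) <= 0.
    by rewrite subr_le0 => /le_trans; apply; rewrite mulr_ge0_le0 ?subr_ge0 ?ybarI.
  apply: (cluster_le0 cl2 filterT Gcont); apply: nearW => k _.
  have := econvex_fine (h_fin (x_dom k)) ((h_A1 (x k) i).1 il) ybar (y k) t01.
  rewrite subr_le0 => /le_trans; apply.
  by rewrite gerDl mulr_ge0_le0 ?(yk_feas k).1.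
- suff : `|G (xbar, yh)| <= 0.
    by rewrite normr_le0 subr_eq0 => /eqP ->; rewrite ybarJ // mulr0.
  apply: (cluster_le0 cl2 filterT (cvg_norm Gcont)); apply: nearW => k _.
  have [a [b gE]] := eaffine_fine ((h_A1 (x k) i).2 li).
  have := (yk_feas k).2 li; rewrite /= gE => yk0.
  rewrite /G /= !gE dotvDr !dotvZr.
  have -> : (1 - t) * dotv a ybar + t * dotv a (y k) + b - (1 - t) * (dotv a ybar + b)
            = t * (dotv a (y k) + b) by ring.
  by rewrite yk0 mulr0 normr0.
Qed.

Lemma cluster_Gam yh : cluster (y @ \oo) yh -> Gam l h xbar yh.
Proof.
move=> cl; pose z t := (1 - t) *: ybar + t *: yh.
have z_cont : continuous z.
  move=> t; apply: cvgD.
    by apply: cvgZ; [apply: cvgB; [exact: cvg_cst | exact: cvg_id] | exact: cvg_cst].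
  by apply: cvgZ; [exact: cvg_id | exact: cvg_cst].
have seg_Gam : `[0, 1]%classic `&` (z @^-1` Gam l h xbar) = `[0, 1]%classic.
  apply: segment_connected.
  - exists 0; split; first by rewrite /= in_itv /= lexx ler01.
    by rewrite /= /z subr0 scale1r scale0r addr0.
  - exists ((fun t => (xbar, z t)) @^-1` U).
      apply: open_comp => // t _.
      by apply: cvg_to_pair; [exact: cvg_cst | exact: z_cont].
    rewrite eqEsubset; split=> t [t01 zt]; split=> //; first exact: Gam_U.
    by apply: Gam_segment => //; move: t01; rewrite /= in_itv.
  - exists (z @^-1` Gam l h xbar) => //.
    apply: preimage_closed => [t _|]; first exact: z_cont.
    by apply: Gam_closed => i; [exact: h_fin | exact: (h_dom xbar_dom i).2].
have : (`[0, 1]%classic `&` (z @^-1` Gam l h xbar)) 1 by rewrite seg_Gam /= in_itv /= ler01 lexx.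
by case=> _; rewrite /= /z subrr scale0r add0r scale1r.
Qed.

Variables (nu : nat -> 'rV[R]_m) (M : R).
Hypothesis nu_cvg : nu @ \oo --> ybar.
Hypothesis LamM_near : \forall k \near \oo, LamM l h M (nu k) (x k) (y k) !=set0.

Lemma error_bound_near : \forall k \near \oo, U (x k, y k) ->
  enorm (y k - nu k) <= M * violation l (fun i => fine (h i (x k) (nu k))).
Proof.
apply: filterS LamM_near => k [lam LamM_k] Uk.
apply: LamM_error_bound LamM_k => //; first exact: h_fin.
by move=> i; exact: h_diff_U i Uk.
Qed.

Lemma cluster_eq yh : cluster (y @ \oo) yh -> yh = ybar.
Proof.
move=> cl; have Uyh := Gam_U (cluster_Gam cl).
have xnu_cvg : (x k, nu k) @[k --> \oo] --> (xbar, ybar).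
  exact: cvg_to_pair.
have cl3 := cluster_pair xnu_cvg cl.
pose viol (q : 'rV[R]_n * 'rV[R]_m) := violation l (fun i => f i q).
pose G (q : ('rV[R]_n * 'rV[R]_m) * 'rV[R]_m) := `|q.2 - q.1.2| - M * viol q.1.
have viol0 : viol (xbar, ybar) = 0.
  exact/violation_feasible/(GamP (h_fin xbar_dom)).
have Gcont : {for (xbar, ybar, yh), continuous G}.
  apply: cvgB; first by apply: cvg_norm; apply: cvgB; [exact: cvg_snd | exact: cvg_comp cvg_fst cvg_snd].
  apply: cvgM; first exact: cvg_cst.
  apply: (continuous_comp (f := fst) cvg_fst); apply: violation_cvg => i.
  exact: h_cont_U (Gam_U ybar_Gam).
have QU : nbhs (xbar, ybar, yh) [set q | U (q.1.1, q.2)].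
  have proj_cont : {for (xbar, ybar, yh), continuous (fun q => (q.1.1, q.2))}.
    by apply: cvg_to_pair; [exact: cvg_comp cvg_fst cvg_fst | exact: cvg_snd].
  exact: proj_cont _ (U_open Uyh).
have := cluster_le0 cl3 QU Gcont.
rewrite /G /= viol0 mulr0 subr0 normr_le0 subr_eq0 => /(_ _)/eqP; apply.
apply: filterS error_bound_near => k bound_k /bound_k.
by rewrite subr_le0; exact: le_trans (norm_le_enorm _).
Qed.

Lemma y_cvg (r : R) : (\forall x0 \near xbar, Gam l h x0 `<=` [set z | enorm z <= r]) ->
  y @ \oo --> ybar.
Proof.
move=> Gam_bdd; pose K := [set v : 'rV[R]_m | `|v| <= r + 1].
have Gam_bdd' : \forall x0 \near xbar, Gam l h x0 `<=` [set z | `|z| <= r].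
  by apply: filterS Gam_bdd => x0 Gam_x0 z /Gam_x0; exact: le_trans (norm_le_enorm z).
have K_compact : compact K.
  apply: bounded_closed_compact.
    by exists (r + 1); split; rewrite ?num_real // => M' M'gt v /le_trans; apply; exact: ltW.
  apply: (preimage_closed (f := fun v : 'rV[R]_m => `|v|) (D := [set s | s <= r + 1])).
    by move=> v _; exact: cvg_norm cvg_id.
  exact: closed_le.
have yK : \forall k \near \oo, K (y k).
  have Gam_k_bdd : \forall k \near \oo, Gam l h (x k) `<=` [set z | `|z| <= r].
    exact: x_cvg Gam_bdd'.
  apply: filterS Gam_k_bdd => k Gam_k.
  by apply: le_trans (Gam_k _ (y_Gam k)) _; rewrite lerDl.
have ybarK : nbhs ybar K.
  have ybar_le : `|ybar| <= r := nbhs_singleton Gam_bdd' _ ybar_Gam.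
  have near_ybar : \forall v \near ybar, `|ybar - v| < 1.
    exact: (@cvgr_dist_lt _ _ _ (nbhs ybar) (nbhs_filter ybar) id ybar cvg_id _ ltr01).
  apply: filterS near_ybar => v /ltW v_near.
  have -> : v = ybar - (ybar - v) by rewrite opprB addrC subrK.
  by apply: le_trans (ler_normB _ _) _; rewrite lerD.
apply: (compact_cluster_set1 (@norm_hausdorff _ 'rV[R]_m) K_compact ybarK _ yK).
rewrite eqEsubset; split=> [yh /cluster_eq -> // | _ ->].
by have [yh [_ cl]] := K_compact (y @ \oo) _ yK; rewrite -(cluster_eq cl).
Qed.

Lemma dist_Gam_le_violation : y @ \oo --> ybar -> \forall k \near \oo,
  dist_set (nu k) (Gam l h (x k)) <= M * violation l (fun i => fine (h i (x k) (nu k))).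
Proof.
move=> y_cvg; have xy_cvg : (x k, y k) @[k --> \oo] --> (xbar, ybar).
  exact: cvg_to_pair.
have U_near : \forall k \near \oo, U (x k, y k) := xy_cvg _ (U_open (Gam_U ybar_Gam)).
apply: filterS2 U_near error_bound_near => k Uk bound_k.
exact: le_trans (dist_set_le _ (y_Gam k)) (bound_k Uk).
Qed.

End Limits.

Theorem lemma3p1 (R : realType) (n m p l : nat)
  (h : 'I_p -> 'rV[R]_n -> 'rV[R]_m -> \bar R)
  (xbar : 'rV[R]_n) (ybar : 'rV[R]_m) (M : R)
  (x : nat -> 'rV[R]_n) (nu y : nat -> 'rV[R]_m) :
  (l <= p)%N ->
  domG l h xbar -> Gam l h xbar ybar ->
  (* continuity and continuous differentiability in y near {xbar} x Gamma(xbar) *)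
  (exists U : set ('rV[R]_n * 'rV[R]_m),
     open U /\ (forall z, Gam l h xbar z -> U (xbar, z)) /\
     forall q, U q -> forall i : 'I_p,
       h i q.1 q.2 \is a fin_num /\
       {for q, continuous (fun q' : 'rV[R]_n * 'rV[R]_m => fine (h i q'.1 q'.2))} /\
       differentiable (fun z => fine (h i q.1 z)) q.2 /\
       {for q, continuous (fun q' : 'rV[R]_n * 'rV[R]_m =>
                             gradv (fun z => fine (h i q'.1 z)) q'.2)}) ->
  (* h_i(x, .) : R^m -> R is real-valued and continuous for x in dom Gamma *)
  (forall x0, domG l h x0 -> forall i : 'I_p,
     (forall z, h i x0 z \is a fin_num) /\ continuous (fun z => fine (h i x0 z))) ->
  (* (A1) *)
  (forall x0 (i : 'I_p), ((i < l)%N -> econvex (h i x0)) /\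
                         ((l <= i)%N -> eaffine (h i x0))) ->
  (* (A2) Gamma locally bounded at xbar *)
  (exists r : R, \forall x0 \near xbar, Gam l h x0 `<=` [set z | enorm z <= r]) ->
  0 < M ->
  (forall k, domG l h (x k)) ->
  x @ \oo --> xbar ->
  nu @ \oo --> ybar ->
  (forall k, ~ Gam l h (x k) (nu k)) ->
  (forall k, in_proj (y k) (nu k) (Gam l h (x k))) ->
  (\forall k \near \oo, LamM l h M (nu k) (x k) (y k) !=set0) ->
  y @ \oo --> ybar /\
  \forall k \near \oo,
    dist_set (nu k) (Gam l h (x k)) <=
    M * \big[Num.max/0]_(i < p)
          (if (i < l)%N then fine (h i (x k) (nu k))
           else `|fine (h i (x k) (nu k))|).
Proof.
move=> _ xbar_dom ybar_Gam [U [U_open [Gam_U hU]]] h_dom h_A1 [r Gam_bdd] _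
  x_dom x_cvg nu_cvg _ y_proj LamM_near.
have y_Gam k : Gam l h (x k) (y k) := (y_proj k).1.
have h_cont_U q i (Uq : U q) := (hU q Uq i).2.1.
have h_diff_U q i (Uq : U q) := (hU q Uq i).2.2.1.
have y_ybar : y @ \oo --> ybar by apply: (y_cvg U_open); eassumption.
by split=> //; apply: (dist_Gam_le_violation U_open); eassumption.
Qed.
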